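(* Let $E$ be an IL FS encoder with $s$ states whose Kraft matrix is irreducible, let $L_{\max}=\max_{z,x}L[f(z,x)]$, let $\ell$ be a positive integer, and let $(Z,X^\ell)$ be random variables with an arbitrary joint distribution $P$ on $\mathcal{Z}\times\mathcal{X}^\ell$. Then $$\frac{\mathbb{E}\{L[f(Z,X^\ell)]\}}{\ell}\ \ge\ \frac{H(Z,X^\ell)}{\ell}-\frac{2\log_2 s+(s-1)L_{\max}}{\ell}\ \ge\ \frac{H(X^\ell)}{\ell}-\frac{2\log_2 s+(s-1)L_{\max}}{\ell},$$ where entropies are in bits. If moreover the marginal of $X^\ell$ is the $\ell$-dimensional marginal of a stationary process, then $$\frac{\mathbb{E}\{L[f(Z,X^\ell)]\}}{\ell}\ \ge\ H(X_\ell\mid X^{\ell-1})-\frac{2\log_2 s+(s-1)L_{\max}}{\ell}.$$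
   Context: A finite-state (FS) encoder is a quintuple $E=(\mathcal{X},\mathcal{Y},\mathcal{Z},f,g)$, where $\mathcal{X}$ is a finite source alphabet of size $\alpha$, $\mathcal{Y}$ is a finite set of binary strings (possibly containing the empty string, of length $0$), $\mathcal{Z}$ is a finite set of $s$ states, $f:\mathcal{Z}\times\mathcal{X}\to\mathcal{Y}$ is the output function and $g:\mathcal{Z}\times\mathcal{X}\to\mathcal{Z}$ is the next-state function. For $z\in\mathcal{Z}$ and $x^n=(x_1,\dots,x_n)\in\mathcal{X}^n$, set $z_1=z$, $z_{i+1}=g(z_i,x_i)$; write $g(z,x^n)=z_{n+1}$ and let $f(z,x^n)$ denote the binary string obtained by concatenating $f(z_1,x_1),\dots,f(z_n,x_n)$; its length is $L[f(z,x^n)]=\sum_{i=1}^n L[f(z_i,x_i)]$, where $L(\cdot)$ denotes the length of a binary string. The encoder is information lossless (IL) if for every $z\in\mathcal{Z}$ and every $n\ge1$, the map $x^n\mapsto (f(z,x^n),g(z,x^n))$ is injective on $\mathcal{X}^n$. The Kraft matrix of $E$ is the $s\times s$ nonnegative matrix $K$ with entries $K_{zz'}=\sum_{\{x\in\mathcal{X}:\ g(z,x)=z'\}}2^{-L[f(z,x)]}$ (an empty sum is $0$). *)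

From HB Require Import structures.
From mathcomp Require Import all_boot all_order all_algebra.
From mathcomp Require Import reals exp.
Set Implicit Arguments. Unset Strict Implicit. Unset Printing Implicit Defensive.
Import Order.TTheory GRing.Theory Num.Theory.
Local Open Scope ring_scope.

Section FS.
Variable R : realType.

(* logarithm base 2 (ln 0 = 0 in mathcomp-analysis, so 0 * log2 0 = 0) *)
Definition log2 (x : R) : R := ln x / ln 2.

Variables (X : finType) (s : nat).
Variables (f : 'I_s -> X -> seq bool) (g : 'I_s -> X -> 'I_s).

Fixpoint fstar (z : 'I_s) (xs : seq X) : seq bool :=
  if xs is x :: xs' then f z x ++ fstar (g z x) xs' else [::].

Fixpoint gstar (z : 'I_s) (xs : seq X) : 'I_s :=
  if xs is x :: xs' then gstar (g z x) xs' else z.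

Definition IL : Prop :=
  forall (z : 'I_s) (n : nat), (0 < n)%N ->
    injective (fun xs : n.-tuple X => (fstar z xs, gstar z xs)).

Definition kraft_matrix : 'M[R]_s :=
  \matrix_(z, z') \sum_(x : X | g z x == z') 2%:R ^- size (f z x).

Definition irreducible_mx (n : nat) (A : 'M[R]_n) : Prop :=
  forall i j : 'I_n, exists m : nat,
    0 < (iter m (fun B => B *m A) 1%:M) i j.

Definition Lmax : nat := \max_(zx : 'I_s * X) size (f zx.1 zx.2).

End FS.

Section Prob.
Variable R : realType.

Definition is_pmf (T : finType) (P : T -> R) : Prop :=
  (forall t, 0 <= P t) /\ \sum_t P t = 1.

Definition entropy (T : finType) (P : T -> R) : R :=
  - \sum_t P t * log2 (P t).

(* The law of a stationary process on X, given by its cylinder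
   probabilities mu w = Pr[(X_1,...,X_|w|) = w]: a consistent, shift-invariant
   family of finite-dimensional distributions (Kolmogorov). *)
Definition stationary_process (X : finType) (mu : seq X -> R) : Prop :=
  [/\ mu [::] = 1,
      forall w, 0 <= mu w,
      forall w, \sum_(x : X) mu (rcons w x) = mu w
    & forall w, \sum_(x : X) mu (x :: w) = mu w].

Definition cond_entropy_last (X : finType) (mu : seq X -> R) (l : nat) : R :=
  - \sum_(xs : l.-tuple X) mu xs * log2 (mu xs / mu (take l.-1 xs)).

End Prob.

From HB Require Import structures.
From mathcomp Require Import all_boot all_order all_algebra.
From mathcomp Require Import reals exp.
From mathcomp Require Import lra zify.
Import Order.TTheory GRing.Theory Num.Theory.
Local Open Scope ring_scope.

Set Implicit Arguments.
Unset Strict Implicit.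
Unset Printing Implicit Defensive.

(* Write [K_n(z,z')] for the sum of [2^-L[f(z,w)]] over the input words [w]
   of length [n] driving [z] to [z']: it is the [(z,z')] entry of the [n]-th
   power of the Kraft matrix, and it is supermultiplicative along
   concatenation of words. Information losslessness makes the words from [z]
   to [z'] produce distinct outputs of length at most [n Lmax], so [K_n(z,z')]
   grows at most linearly in [n]; hence the return sums [K_n(z,z)] never
   exceed 1, for otherwise their powers would grow exponentially.
   Irreducibility lets [z'] return to [z] along a word of length [< s],
   contributing at least [2^-(s-1)Lmax], so [K_n(z,z') <= 2^((s-1)Lmax)] and
   the Kraft sum over all [(z, x^l)] is at most [s^2 2^((s-1)Lmax)]. Gibbs'
   inequality against these weights gives the first bound. The second is
   monotonicity of entropy under marginalization, and the third is the chain
   rule together with the fact that [H(X_k | X^(k-1))] is nonincreasing in [k]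
   for a stationary process. *)

Section Words.
Variable T : finType.

Fixpoint words (n : nat) : seq (seq T) :=
  if n is n'.+1 then [seq x :: w | x <- enum T, w <- words n'] else [:: [::]].

Lemma mem_words n w : (w \in words n) = (size w == n).
Proof.
elim: n w => [|n IH] [|x w] //=; first by apply/allpairsP => -[[a b] [_ _]].
rewrite eqSS -IH; apply/allpairsP/idP => [[[a b] [_ Hb [_ ->]]] //|Hw].
by exists (x, w); rewrite mem_enum.
Qed.

Lemma uniq_words n : uniq (words n).
Proof.
elim: n => [|n IH] //=; apply: allpairs_uniq => //; first exact: enum_uniq.
by move=> [a b] [c d] _ _ /= [-> ->].
Qed.

Lemma size_words n : size (words n) = (#|T| ^ n)%N.
Proof. by elim: n => [|n IH] //=; rewrite size_allpairs IH -cardE expnS. Qed.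

Variable V : nmodType.
Implicit Type F : seq T -> V.

Lemma big_words_cons n F :
  \sum_(w <- words n.+1) F w = \sum_(x : T) \sum_(w <- words n) F (x :: w).
Proof. by rewrite /= big_allpairs_dep big_enum. Qed.

Lemma big_words_rcons n F :
  \sum_(w <- words n.+1) F w = \sum_(v <- words n) \sum_(x : T) F (rcons v x).
Proof.
elim: n F => [|n IH] F.
  by rewrite big_words_cons big_seq1; apply: eq_bigr => x _; rewrite big_seq1.
by rewrite !big_words_cons; apply: eq_bigr => x _; rewrite IH.
Qed.

Lemma big_words_cat a b F :
  \sum_(w <- words (a + b)) F w =
  \sum_(u <- words a) \sum_(v <- words b) F (u ++ v).
Proof.
elim: a F => [|a IH] F; first by rewrite big_seq1.
by rewrite addSn !big_words_cons; apply: eq_bigr => x _; rewrite IH.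
Qed.

Lemma big_tuple_words n F : \sum_(t : n.-tuple T) F t = \sum_(w <- words n) F w.
Proof.
rewrite -big_enum -(big_map val xpredT F); apply/perm_big/uniq_perm.
- by rewrite map_inj_uniq ?enum_uniq //; exact: val_inj.
- exact: uniq_words.
move=> w; rewrite mem_words; apply/mapP/idP => [[t _ ->]|Hw].
  by rewrite size_tuple.
by exists (Tuple Hw); rewrite ?mem_enum.
Qed.

End Words.

Section Logarithms.
Variable R : realType.

Lemma ln2_gt0 : 0 < ln (2 : R).
Proof. by apply: ln_gt0; rewrite ltr1n. Qed.

Lemma ln_le_subr1 (y : R) : 0 < y -> ln y <= y - 1.
Proof.
move=> y_gt0; have := @le_ln1Dx R (y - 1).
by rewrite addrCA subrr addr0; apply; lra.
Qed.

Lemma gibbs_term (p q : R) : 0 <= p -> 0 <= q -> (0 < p -> 0 < q) ->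
  p * (ln q - ln p) <= q - p.
Proof.
move=> p_ge0 q_ge0 pq; have [->|p_neq0] := eqVneq p 0; first by rewrite mul0r subr0.
have p_gt0 : 0 < p by rewrite lt0r p_neq0.
have q_gt0 := pq p_gt0.
rewrite -ln_div ?posrE //; apply: le_trans (_ : p * (q / p - 1) <= _).
  by rewrite ler_pM2l // ln_le_subr1 // divr_gt0.
by rewrite mulrBr mulr1 mulrCA divff ?mulr1.
Qed.

Lemma gibbs_term_ratio (a p1 p2 p3 : R) :
  0 <= a -> a <= p1 -> a <= p2 -> p2 <= p3 ->
  a - p1 * p2 / p3 <= a * (ln (a / p1) - ln (p2 / p3)).
Proof.
move=> a_ge0 le_a1 le_a2 le_23; have [->|a_neq0] := eqVneq a 0.
  rewrite !mul0r sub0r oppr_le0 divr_ge0 ?mulr_ge0 //.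
  - exact: le_trans le_a1.
  - exact: le_trans le_a2.
  - exact: le_trans (le_trans a_ge0 le_a2) le_23.
have a_gt0 : 0 < a by rewrite lt0r a_neq0.
have p1_gt0 : 0 < p1 by apply: lt_le_trans le_a1.
have p2_gt0 : 0 < p2 by apply: lt_le_trans le_a2.
have p3_gt0 : 0 < p3 by apply: lt_le_trans le_23.
have Q_gt0 : 0 < p1 * p2 / p3 by rewrite divr_gt0 ?mulr_gt0.
have := gibbs_term (ltW a_gt0) (ltW Q_gt0) (fun _ => Q_gt0).
rewrite !ln_div ?posrE ?mulr_gt0 // lnM ?posrE //; nra.
Qed.

Lemma mulr_ln_div (a b : R) : 0 <= a -> a <= b ->
  a * ln (a / b) = a * ln a - a * ln b.
Proof.
move=> a_ge0 ab; have [->|a_neq0] := eqVneq a 0; first by rewrite !mul0r subr0.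
have a_gt0 : 0 < a by rewrite lt0r a_neq0.
by rewrite ln_div ?posrE ?mulrBr // (lt_le_trans a_gt0).
Qed.

Lemma log2M (x y : R) : 0 < x -> 0 < y -> log2 (x * y) = log2 x + log2 y.
Proof. by move=> x_gt0 y_gt0; rewrite /log2 lnM ?posrE // mulrDl. Qed.

Lemma log2_exp2 k : log2 (2 ^+ k : R) = k%:R.
Proof. by rewrite /log2 lnXn ?ltr0n // mulrnAl divff ?gt_eqF ?ln2_gt0. Qed.

Lemma log2_exp2N k : log2 (2 ^- k : R) = - k%:R.
Proof.
by rewrite /log2 lnV ?posrE ?exprn_gt0 // mulNr -[ln _ / _]/(log2 _) log2_exp2.
Qed.

Lemma ler_log2 (x y : R) : 0 < x -> x <= y -> log2 x <= log2 y.
Proof.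
move=> x_gt0 xy; rewrite ler_pM2r ?invr_gt0 ?ln2_gt0 //.
by rewrite ler_ln ?posrE // (lt_le_trans x_gt0).
Qed.

End Logarithms.

Section Entropy.
Variable R : realType.

Lemma pmf_card_gt0 (T : finType) (P : T -> R) : is_pmf P -> (0 < #|T|)%N.
Proof.
move=> [_ P1]; rewrite lt0n; apply/eqP => /card0_eq T0.
by move: P1; rewrite big_pred0 // => /eqP; rewrite eq_sym oner_eq0.
Qed.

Lemma sumr_gt0 (T : finType) (q : T -> R) :
  (0 < #|T|)%N -> (forall t, 0 < q t) -> 0 < \sum_t q t.
Proof.
move=> /card_gt0P[t _] q_gt0.
by rewrite (bigD1 t) //= ltr_pwDl // sumr_ge0 // => u _; exact: ltW.
Qed.

Lemma entropy_le_cross_entropy (T : finType) (P q : T -> R) :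
  is_pmf P -> (forall t, 0 < q t) ->
  entropy P <= - \sum_t P t * log2 (q t) + log2 (\sum_t q t).
Proof.
move=> HP q_gt0; have [P_ge0 P1] := HP; set Q := \sum_t q t.
have Q_gt0 : 0 < Q by apply: sumr_gt0 (pmf_card_gt0 HP) q_gt0.
have gibbs : \sum_t P t * (ln (q t / Q) - ln (P t)) <= 0.
  apply: le_trans (_ : \sum_t (q t / Q - P t) <= _).
    apply: ler_sum => t _; apply: gibbs_term => //.
      by rewrite divr_ge0 ?ltW.
    by move=> _; rewrite divr_gt0.
  by rewrite sumrB -mulr_suml mulfV ?gt_eqF // P1 subrr.
have log2_sum F : \sum_t P t * (F t / ln 2) = (\sum_t P t * F t) / ln 2 :> R.
  by rewrite mulr_suml; apply: eq_bigr => t _; rewrite mulrA.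
rewrite /entropy /log2 !log2_sum -!mulNr -mulrDl ler_pM2r ?invr_gt0 ?ln2_gt0 //.
move: gibbs; under eq_bigr => t _ do rewrite ln_div ?posrE // !mulrBr.
by rewrite !sumrB -mulr_suml P1 mul1r; lra.
Qed.

Lemma entropy_marginal_le (A B : finType) (P : A * B -> R) :
  is_pmf P -> entropy (fun b => \sum_a P (a, b)) <= entropy P.
Proof.
move=> [P_ge0 _]; rewrite /entropy lerN2.
have -> : \sum_p P p * log2 (P p) = \sum_a \sum_b P (a, b) * log2 (P (a, b)).
  by rewrite pair_bigA; apply: eq_bigr => -[].
rewrite exchange_big /=.
apply: ler_sum => b _; rewrite mulr_suml; apply: ler_sum => a _.
have [->|P_neq0] := eqVneq (P (a, b)) 0; first by rewrite !mul0r.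
have P_gt0 : 0 < P (a, b) by rewrite lt0r P_neq0 P_ge0.
rewrite ler_pM2l // ler_log2 // (bigD1 a) //= lerDl sumr_ge0 // => *; exact: P_ge0.
Qed.

End Entropy.

Lemma exists_expn2_gt_linear a : exists k, ((k * a).+1 < 2 ^ k)%N.
Proof.
exists (4 * a.+1); have := ltn_expl (2 * a.+1) (isT : (1 < 2)%N).
have -> : (2 ^ (4 * a.+1) = 2 ^ (2 * a.+1) * 2 ^ (2 * a.+1))%N.
  by rewrite -expnD; congr (_ ^ _)%N; lia.
set y := (2 ^ _)%N; nia.
Qed.

Lemma exists_expr_gt_linear (R : realType) (c : R) a :
  1 < c -> exists k, (k * a).+1%:R < c ^+ k.
Proof.
move=> c_gt1; have c_gt0 : 0 < c by apply: lt_trans c_gt1.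
have lnc_gt0 : 0 < ln c by rewrite ln_gt0.
pose j := Num.bound (ln 2 / ln c).
have c_exp_ge2 : 2 <= c ^+ j.
  have := @archi_boundP R (ln 2 / ln c).
  rewrite divr_ge0 ?(ltW (ln2_gt0 R)) ?(ltW lnc_gt0) // => /(_ isT).
  rewrite ltr_pdivrMr // => lt2.
  rewrite -(ler_ln (x := 2)) ?posrE ?exprn_gt0 // lnXn //.
  by move: lt2; rewrite mulr_natl => /ltW.
have [k lt_k] := exists_expn2_gt_linear (j * a).
exists (j * k)%N; apply: lt_le_trans (_ : 2 ^+ k <= _).
  by rewrite -natrX ltr_nat mulnAC mulnC.
by rewrite exprM lerXn2r ?nnegrE ?exprn_ge0 ?(ltW c_gt0).
Qed.

Lemma sum_uniq_bitseq_le (R : numFieldType) (U : seq bitseq) N : uniq U ->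
  {in U, forall u, size u <= N}%N -> \sum_(u <- U) 2 ^- size u <= N.+1%:R :> R.
Proof.
move=> uniqU U_le.
have -> : \sum_(u <- U) 2 ^- size u =
    \sum_(k < N.+1) \sum_(u <- U | size u == k) 2 ^- k :> R.
  rewrite (exchange_big_dep xpredT) //= big_seq [RHS]big_seq.
  apply: eq_bigr => u /U_le; rewrite -ltnS => lt_uN.
  by rewrite (big_pred1 (Ordinal lt_uN)) // => k; rewrite eq_sym.
apply: le_trans (_ : \sum_(k < N.+1) (1 : R) <= _).
  2: by rewrite sumr_const card_ord.
apply: ler_sum => k _.
rewrite (eq_bigr (fun=> 2 ^- k *+ 1)) // sumrMnr sum1_count.
have count_le : (count (fun u => size u == k) U <= 2 ^ k)%N.
  rewrite -size_filter -(card_bool) -size_words uniq_leq_size ?filter_uniq //.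
  by move=> u; rewrite mem_filter mem_words => /andP[].
have exp2N_ge0 : 0 <= 2 ^- k :> R by rewrite invr_ge0 exprn_ge0.
apply: le_trans (ler_wpMn2l exp2N_ge0 count_le) _.
by rewrite -[_ *+ (2 ^ k)%N]mulr_natr natrX mulVf // expf_neq0 // pnatr_eq0.
Qed.

Section KraftSums.
Variables (R : realType) (X : finType) (s : nat).
Variables (f : 'I_s -> X -> seq bool) (g : 'I_s -> X -> 'I_s).

Lemma gstar_cat z u v : gstar g z (u ++ v) = gstar g (gstar g z u) v.
Proof. by elim: u z => [|x u IH] z //=. Qed.

Lemma fstar_cat z u v :
  fstar f g z (u ++ v) = fstar f g z u ++ fstar f g (gstar g z u) v.
Proof. by elim: u z => [|x u IH] z //=; rewrite IH catA. Qed.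

Lemma size_f_le_Lmax z x : (size (f z x) <= Lmax f)%N.
Proof.
exact: (leq_bigmax_cond (F := fun zx : 'I_s * X => size (f zx.1 zx.2)) (z, x)).
Qed.

Lemma size_fstar_le z w : (size (fstar f g z w) <= size w * Lmax f)%N.
Proof.
elim: w z => [|x w IH] z //=.
by rewrite size_cat mulSn leq_add ?size_f_le_Lmax ?IH.
Qed.

Definition kraft_sum n z z' : R :=
  \sum_(w <- words X n | gstar g z w == z') 2 ^- size (fstar f g z w).

Lemma kraft_sum_ge0 n z z' : 0 <= kraft_sum n z z'.
Proof. by apply: sumr_ge0 => w _; rewrite invr_ge0 exprn_ge0. Qed.

Lemma kraft_sum0 z : kraft_sum 0 z z = 1.
Proof. by rewrite /kraft_sum big_cons big_nil /= eqxx expr0 invr1 addr0. Qed.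

Lemma kraft_matrix_iterE n z z' :
  iter n (fun B => B *m kraft_matrix R f g) 1%:M z z' = kraft_sum n z z'.
Proof.
elim: n z' => [|n IH] z'.
  by rewrite /kraft_sum big_mkcond big_seq1 mxE /= expr0 invr1 eq_sym; case: eqP.
rewrite iterS mxE /kraft_sum [RHS]big_mkcond big_words_rcons.
under eq_bigr => y _ do rewrite IH big_distrl.
rewrite (exchange_big_dep xpredT) //=; apply: eq_bigr => v _.
rewrite (big_pred1 (gstar g z v)) => [|y]; last by rewrite eq_sym.
rewrite mxE big_distrr big_mkcond /=; apply: eq_bigr => x _.
rewrite -cats1 gstar_cat fstar_cat size_cat /= cats0 exprD invfM.
by case: eqP.
Qed.

Lemma kraft_sum_mul_le a b z z' z'' :
  kraft_sum a z z' * kraft_sum b z' z'' <= kraft_sum (a + b) z z''.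
Proof.
rewrite /kraft_sum [X in _ <= X]big_mkcond big_words_cat big_distrl /= big_mkcond.
apply: ler_sum => u _; case: eqP => [<-|_]; last first.
  by apply: sumr_ge0 => v _; case: ifP => // _; rewrite invr_ge0 exprn_ge0.
rewrite big_distrr /= big_mkcond; apply: ler_sum => v _.
by rewrite gstar_cat fstar_cat size_cat exprD invfM; case: ifP.
Qed.

Lemma kraft_sum_expr_le n z k : kraft_sum n z z ^+ k <= kraft_sum (k * n) z z.
Proof.
elim: k => [|k IH]; first by rewrite expr0 kraft_sum0.
rewrite exprS mulSn; apply: le_trans (kraft_sum_mul_le n (k * n) z z z).
by rewrite ler_wpM2l ?kraft_sum_ge0.
Qed.

Lemma gstar_short_word z w :
  exists2 w', gstar g z w' = gstar g z w & (size w' < s)%N.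
Proof.
elim: {w}_.+1 {-2}w (ltnSn (size w)) => // n IH w le_wn.
have [|le_sw] := ltnP (size w) s; first by exists w.
pose visited := [seq gstar g z (take i w) | i <- iota 0 (size w).+1].
have : ~~ uniq visited.
  apply/negP => /uniq_leq_size/(_ (fun y _ => mem_enum _ y)).
  by rewrite size_enum_ord size_map size_iota ltnNge le_sw.
case/(uniqPn z) => i [j [lt_ij]]; rewrite size_map size_iota ltnS => le_jw.
have lt_iw : (i < size w)%N := leq_trans lt_ij le_jw.
rewrite !(nth_map 0%N) ?size_iota ?ltnS ?(ltnW lt_iw) //.
rewrite !nth_iota ?ltnS ?(ltnW lt_iw) // !add0n => gstar_ij.
have lt_cut : (size (take i w ++ drop j w) < n)%N.
  rewrite size_cat size_take size_drop lt_iw.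
  by move: le_wn lt_ij le_jw; clear; lia.
have [w' g_w' lt_w's] := IH _ lt_cut.
by exists w'; rewrite // g_w' gstar_cat gstar_ij -gstar_cat cat_take_drop.
Qed.

Lemma kraft_sum_gt0_reach n z z' : 0 < kraft_sum n z z' -> exists w, gstar g z w = z'.
Proof.
move=> sum_gt0; have [/hasP[w _ /eqP gw]|no_reach] :=
  boolP (has (fun w => gstar g z w == z') (words X n)); first by exists w.
by move: sum_gt0; rewrite /kraft_sum big_hasC ?ltxx.
Qed.

Lemma kraft_sum_short_ge z w :
  exists m, 2 ^- ((s - 1) * Lmax f) <= kraft_sum m z (gstar g z w).
Proof.
have [w' gw' lt_w's] := gstar_short_word z w.
exists (size w'); rewrite /kraft_sum (big_rem w') ?mem_words //= gw' eqxx.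
apply: le_trans (_ : 2 ^- size (fstar f g z w') <= _).
  rewrite lef_pV2 ?posrE ?exprn_gt0 // ler_eXn2l ?ltr1n //.
  by apply: leq_trans (size_fstar_le z w') _; rewrite leq_mul //; lia.
by rewrite lerDl sumr_ge0 // => v _; rewrite invr_ge0 exprn_ge0.
Qed.

Lemma sum_kraft_sum n z :
  \sum_z' kraft_sum n z z' = \sum_(w <- words X n) 2 ^- size (fstar f g z w).
Proof.
rewrite /kraft_sum (exchange_big_dep xpredT) //=; apply: eq_bigr => w _.
by rewrite (big_pred1 (gstar g z w)) // => z'; rewrite eq_sym.
Qed.

Hypothesis fg_IL : IL f g.

Lemma kraft_sum_le_linear n z z' : kraft_sum n z z' <= (n * Lmax f).+1%:R.
Proof.
rewrite /kraft_sum -big_filter.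
rewrite -(big_map (fstar f g z) xpredT (fun u => 2 ^- size u)).
apply: sum_uniq_bitseq_le; last first.
  move=> u /mapP[w]; rewrite mem_filter mem_words => /andP[_ /eqP <-] ->.
  exact: size_fstar_le.
rewrite map_inj_in_uniq ?filter_uniq ?uniq_words // => w1 w2.
rewrite !mem_filter !mem_words => /andP[/eqP g1 s1] /andP[/eqP g2 s2] f12.
have [n0|n_gt0] := posnP n.
  by move: s1 s2; rewrite n0 => /eqP/size0nil -> /eqP/size0nil ->.
have := @fg_IL z n n_gt0 (Tuple s1) (Tuple s2).
by rewrite /= f12 g1 g2 => /(_ erefl)/(congr1 val).
Qed.

Lemma kraft_sum_diag_le1 n z : kraft_sum n z z <= 1.
Proof.
rewrite leNgt; apply/negP => sum_gt1.
have [k lt_k] := exists_expr_gt_linear (n * Lmax f) sum_gt1.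
have := le_trans (kraft_sum_expr_le n z k) (kraft_sum_le_linear (k * n) z z).
by rewrite leNgt -mulnA lt_k.
Qed.

Hypothesis kraft_irreducible : irreducible_mx (kraft_matrix R f g).

Lemma kraft_sum_le_exp2 n z z' : kraft_sum n z z' <= 2 ^+ ((s - 1) * Lmax f).
Proof.
have [m] := kraft_irreducible z' z; rewrite kraft_matrix_iterE.
case/kraft_sum_gt0_reach => w gw; have [m' ge_m'] := kraft_sum_short_ge z' w.
rewrite gw in ge_m'; rewrite -[X in _ <= X]mul1r -ler_pdivrMr ?exprn_gt0 //.
apply: le_trans (kraft_sum_diag_le1 (n + m') z).
apply: le_trans (kraft_sum_mul_le n m' z z' z).
by rewrite ler_wpM2l ?kraft_sum_ge0.
Qed.

Lemma sum_kraft_weights_le n :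
  \sum_(p : 'I_s * n.-tuple X) 2 ^- size (fstar f g p.1 p.2)
    <= s%:R * s%:R * 2 ^+ ((s - 1) * Lmax f) :> R.
Proof.
have -> : \sum_(p : 'I_s * n.-tuple X) 2 ^- size (fstar f g p.1 p.2) =
    \sum_z \sum_z' kraft_sum n z z'.
  transitivity (\sum_z \sum_(t : n.-tuple X) 2 ^- size (fstar f g z t) : R).
    by rewrite pair_bigA.
  apply: eq_bigr => z _; rewrite sum_kraft_sum.
  exact: (big_tuple_words _ (fun w => 2 ^- size (fstar f g z w))).
apply: le_trans (_ : \sum_(z : 'I_s) \sum_(z' : 'I_s) 2 ^+ ((s - 1) * Lmax f) <= _).
  by do 2!(apply: ler_sum => ? _); exact: kraft_sum_le_exp2.
by rewrite !sumr_const !card_ord -mulrnA -natrM mulr_natl.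
Qed.

Lemma entropy_le_expected_length n (P : 'I_s * n.-tuple X -> R) : is_pmf P ->
  entropy P <= \sum_p P p * (size (fstar f g p.1 p.2))%:R
                + (2 * log2 (s%:R : R) + (s%:R - 1) * (Lmax f)%:R).
Proof.
move=> HP; have [[z _] _] := card_gt0P (pmf_card_gt0 HP).
have s_gt0 : (0 < s)%N by apply: leq_ltn_trans (ltn_ord z).
have q_gt0 (p : 'I_s * n.-tuple X) : 0 < 2 ^- size (fstar f g p.1 p.2) :> R.
  by rewrite invr_gt0 exprn_gt0.
apply: le_trans (entropy_le_cross_entropy HP q_gt0) _.
under eq_bigr => p _ do rewrite log2_exp2N mulrN.
rewrite sumrN opprK lerD2l.
have := ler_log2 (sumr_gt0 (pmf_card_gt0 HP) q_gt0) (sum_kraft_weights_le n).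
move/le_trans; apply.
have s_pos : 0 < s%:R :> R by rewrite ltr0n.
rewrite !log2M ?mulr_gt0 ?exprn_gt0 // log2_exp2 natrM natrB //.
lra.
Qed.

End KraftSums.

Section Stationary.
Variables (R : realType) (X : finType) (mu : seq X -> R).
Hypothesis mu_stationary : stationary_process mu.

Lemma mu_nil : mu [::] = 1. Proof. by case: mu_stationary. Qed.
Lemma mu_ge0 w : 0 <= mu w. Proof. by case: mu_stationary. Qed.
Lemma sum_mu_rcons w : \sum_x mu (rcons w x) = mu w. Proof. by case: mu_stationary. Qed.
Lemma sum_mu_cons w : \sum_x mu (x :: w) = mu w. Proof. by case: mu_stationary. Qed.

Lemma mu_rcons_le w x : mu (rcons w x) <= mu w.
Proof.
rewrite -(sum_mu_rcons w) (bigD1 x) //= lerDl.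
by apply: sumr_ge0 => y _; exact: mu_ge0.
Qed.

Lemma mu_cons_le w x : mu (x :: w) <= mu w.
Proof.
rewrite -(sum_mu_cons w) (bigD1 x) //= lerDl.
by apply: sumr_ge0 => y _; exact: mu_ge0.
Qed.

Lemma sum_words_mu n : \sum_(w <- words X n) mu w = 1.
Proof.
elim: n => [|n IH]; first by rewrite big_seq1 mu_nil.
by rewrite big_words_rcons -[RHS]IH; apply: eq_bigr => v _; rewrite sum_mu_rcons.
Qed.

Definition block_entropy n : R := - \sum_(w <- words X n) mu w * ln (mu w).

Definition cond_entropy m : R :=
  - \sum_(v <- words X m) \sum_x mu (rcons v x) * ln (mu (rcons v x) / mu v).

Lemma cond_entropy_chain m : cond_entropy m = block_entropy m.+1 - block_entropy m.
Proof.
rewrite /cond_entropy /block_entropy -opprD; congr (- _).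
rewrite big_words_rcons -sumrB; apply: eq_bigr => v _.
rewrite -{2}(sum_mu_rcons v) mulr_suml -sumrB; apply: eq_bigr => x _.
by rewrite mulr_ln_div ?mu_ge0 ?mu_rcons_le.
Qed.

Lemma block_entropy_sum n : block_entropy n = \sum_(k < n) cond_entropy k.
Proof.
elim: n => [|n IH].
  by rewrite /block_entropy big_ord0 big_seq1 mu_nil ln1 mulr0 oppr0.
by rewrite big_ord_recr /= -IH cond_entropy_chain addrC subrK.
Qed.

(* Stationarity rewrites [H(X_(m+1) | X^m)] as a sum over the words
   [a :: v ++ [x]] too; Gibbs' inequality against [Q] then says that
   conditioning also on [a] does not increase entropy. *)
Lemma cond_entropy_nonincr m : cond_entropy m.+1 <= cond_entropy m.
Proof.
pose Q a v x := mu (a :: v) * mu (rcons v x) / mu v.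
have sum_Q_le1 : \sum_a \sum_(v <- words X m) \sum_x Q a v x <= 1.
  rewrite -(sum_words_mu m.+1) big_words_cons.
  apply: ler_sum => a _; apply: ler_sum => v _.
  rewrite -mulr_suml -mulr_sumr sum_mu_rcons.
  have [->|v_neq0] := eqVneq (mu v) 0; first by rewrite invr0 mulr0 mu_ge0.
  by rewrite mulfK.
have sum_mu1 : \sum_a \sum_(v <- words X m) \sum_x mu (a :: rcons v x) = 1.
  rewrite -(sum_words_mu m.+2) big_words_cons.
  by apply: eq_bigr => a _; rewrite big_words_rcons.
rewrite /cond_entropy lerN2 -subr_ge0 big_words_cons.
have -> : \sum_(v <- words X m) \sum_x mu (rcons v x) * ln (mu (rcons v x) / mu v) =
    \sum_a \sum_(v <- words X m) \sum_x
      mu (a :: rcons v x) * ln (mu (rcons v x) / mu v).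
  rewrite [RHS]exchange_big /=; apply: eq_bigr => v _.
  rewrite [RHS]exchange_big /=; apply: eq_bigr => x _.
  by rewrite -mulr_suml sum_mu_cons.
apply: le_trans (_ : 1 - \sum_a \sum_(v <- words X m) \sum_x Q a v x <= _).
  by rewrite subr_ge0.
rewrite -{1}sum_mu1 -!sumrB; apply: ler_sum => a _.
rewrite -!sumrB; apply: ler_sum => v _.
rewrite -!sumrB; apply: ler_sum => x _.
rewrite -mulrBr; apply: gibbs_term_ratio; rewrite ?mu_ge0 ?mu_cons_le ?mu_rcons_le //.
by rewrite -rcons_cons mu_rcons_le.
Qed.

Lemma cond_entropy_le k m : (k <= m)%N -> cond_entropy m <= cond_entropy k.
Proof.
apply: (homo_leq (r := fun x y => y <= x)) => [x|y x z le_yx le_zy|n].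
- exact: lexx.
- exact: le_trans le_zy le_yx.
- exact: cond_entropy_nonincr.
Qed.

Lemma block_entropy_ge n : n%:R * cond_entropy n.-1 <= block_entropy n.
Proof.
rewrite block_entropy_sum.
apply: le_trans (_ : \sum_(k < n) cond_entropy n.-1 <= _).
  by rewrite sumr_const card_ord mulr_natl.
by apply: ler_sum => k _; apply: cond_entropy_le; have := ltn_ord k; lia.
Qed.

End Stationary.

Lemma cond_entropy_last_le (R : realType) (X : finType) (mu : seq X -> R) l :
  stationary_process mu -> (0 < l)%N ->
  cond_entropy_last mu l <= entropy (fun xs : l.-tuple X => mu xs) / l%:R.
Proof.
move=> mu_stat l_gt0; have [m lE] : exists m, l = m.+1 by exists l.-1; rewrite prednK.
have -> : entropy (fun xs : l.-tuple X => mu xs) = block_entropy mu l / ln 2.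
  rewrite /entropy (big_tuple_words _ (fun w => mu w * log2 (mu w))).
  rewrite mulNr mulr_suml; congr (- _); apply: eq_bigr => w _; exact: mulrA.
have -> : cond_entropy_last mu l = cond_entropy mu l.-1 / ln 2.
  rewrite /cond_entropy_last.
  rewrite (big_tuple_words _ (fun w => mu w * log2 (mu w / mu (take l.-1 w)))).
  rewrite lE big_words_rcons mulNr mulr_suml; congr (- _).
  rewrite big_seq [RHS]big_seq; apply: eq_bigr => v; rewrite mem_words => /eqP size_v.
  rewrite mulr_suml; apply: eq_bigr => x _.
  by rewrite -cats1 take_size_cat // mulrA.
rewrite ler_pdivlMr ?ltr0n // mulrAC ler_pM2r ?invr_gt0 ?ln2_gt0 // mulrC.
exact: block_entropy_ge.
Qed.

Theorem mainTheorem6 (R : realType) (X : finType) (s : nat)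
  (f : 'I_s -> X -> seq bool) (g : 'I_s -> X -> 'I_s)
  (l : nat) (P : {ffun 'I_s * l.-tuple X -> R}) :
  IL f g ->
  irreducible_mx (kraft_matrix R f g) ->
  (0 < l)%N ->
  is_pmf P ->
  let PX := fun xs : l.-tuple X => \sum_(z : 'I_s) P (z, xs) in
  let EL := \sum_(p : 'I_s * l.-tuple X) P p * (size (fstar f g p.1 p.2))%:R in
  let c := 2 * log2 (s%:R : R) + (s%:R - 1) * (Lmax f)%:R in
  [/\ EL / l%:R >= entropy P / l%:R - c / l%:R,
      entropy P / l%:R - c / l%:R >= entropy PX / l%:R - c / l%:R
    & forall mu : seq X -> R, stationary_process mu ->
        (forall xs : l.-tuple X, PX xs = mu xs) ->
        EL / l%:R >= cond_entropy_last mu l - c / l%:R].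
Proof.
move=> fg_IL kraft_irr l_gt0 P_pmf PX EL c.
have linv_gt0 : 0 < l%:R^-1 :> R by rewrite invr_gt0 ltr0n.
have H_le_EL : entropy P / l%:R - c / l%:R <= EL / l%:R.
  rewrite -mulrBl ler_pM2r // lerBlDr.
  exact: (entropy_le_expected_length fg_IL kraft_irr P_pmf).
have HX_le_H : entropy PX / l%:R - c / l%:R <= entropy P / l%:R - c / l%:R.
  by rewrite lerD2r ler_pM2r //; exact: entropy_marginal_le.
split => // mu mu_stat PX_mu; apply: le_trans (le_trans HX_le_H H_le_EL).
rewrite lerD2r (_ : entropy PX = entropy (fun xs : l.-tuple X => mu xs)).
  exact: cond_entropy_last_le.
by congr (- _); apply: eq_bigr => xs _; rewrite PX_mu.
Qed.
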